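(* Let $R$ be a unital semiprime left Goldie ring, $X$ a nonempty set, and for each $x\in X$ let $\sigma_x$ be a ring automorphism of $R$ and $\delta_x$ a $\sigma_x$-derivation of $R$; let $S=R[X;\mathscr{G},\mathscr{D}]$ be the free skew extension with $\mathscr{G}=\{\sigma_x\}$, $\mathscr{D}=\{\delta_x\}$. Fix a linear order on $X$ and extend it to $\langle X\rangle$ as described in the context. Let $A$ be a nonzero ideal of $S$ and let $I$ be the additive subgroup of $R$ generated by the leading coefficients of the nonzero elements of $A$. Then (1) $I$ is a two-sided ideal of $R$; (2) $\sigma_x(I)\subseteq I$ for every $x\in X$; (3) if $M=\mathrm{ann}_R(I)$, then $\sigma_x(M)=M$ and $\delta_x(M)\subseteq M$ for every $x\in X$.
   Context: A $\sigma$-derivation is an additive map $\delta\colon R\to R$ with $\delta(ab)=\delta(a)b+\sigma(a)\delta(b)$. Let $\langle X\rangle$ be the free monoid on $X$. A free skew extension $S=R[X;\mathscr{G},\mathscr{D}]$ is a ring containing $R$ as a subring and $X$ as a subset, which is a free left $R$-module with basis $\langle X\rangle$, and in which $xr=\sigma_x(r)x+\delta_x(r)$ for all $x\in X$, $r\in R$. Given a linear order $\prec$ on $X$, extend it to $\langle X\rangle$ by: $x_{i_1}\cdots x_{i_k}\prec x_{j_1}\cdots x_{j_l}$ iff $k<l$, or $k=l$ and at the first position $s$ where $i_s\ne j_s$ one has $x_{i_s}\prec x_{j_s}$. Each nonzero $f=\sum_\Delta r_\Delta\Delta\in S$ ($r_\Delta\in R$, almost all zero) has leading term the largest $\Delta$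 with $r_\Delta\neq0$, and its coefficient is the leading coefficient of $f$. $\mathrm{ann}_R(I)=\{r\in R\mid rI=Ir=0\}$. A ring is left Goldie if it has no infinite direct sum of nonzero left ideals and has ACC on left annihilators. *)

From HB Require Import structures.
From mathcomp Require Import all_boot all_order all_algebra.
Set Implicit Arguments. Unset Strict Implicit. Unset Printing Implicit Defensive.
Import Order.TTheory GRing.Theory.
Local Open Scope ring_scope.

Definition is_left_ideal (R : pzRingType) (L : R -> Prop) : Prop :=
  [/\ L 0, (forall a b, L a -> L b -> L (a - b)) & (forall r a, L a -> L (r * a))].

Definition is_ideal (R : pzRingType) (J : R -> Prop) : Prop :=
  [/\ J 0, (forall a b, J a -> J b -> J (a - b)),
      (forall r a, J a -> J (r * a)) & (forall r a, J a -> J (a * r))].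

(* J is nilpotent: J^n = 0 for some n, i.e. every product of n elements of J vanishes *)
Definition nilpotent_set (R : pzRingType) (J : R -> Prop) : Prop :=
  exists n : nat, forall l : seq R, size l = n -> (forall a, a \in l -> J a) ->
    \prod_(a <- l) a = 0.

Definition semiprime (R : pzRingType) : Prop :=
  forall J : R -> Prop, is_ideal J -> nilpotent_set J -> forall a, J a -> a = 0.

Definition lann (R : pzRingType) (T : R -> Prop) : R -> Prop :=
  fun r => forall t, T t -> r * t = 0.

Definition independent_family (R : pzRingType) (L : nat -> R -> Prop) : Prop :=
  forall (n : nat) (a : nat -> R), (forall i, (i < n)%N -> L i (a i)) ->
    \sum_(i < n) a i = 0 -> forall i, (i < n)%N -> a i = 0.

Definition left_Goldie (R : pzRingType) : Prop :=
  (~ exists L : nat -> R -> Prop,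
       (forall i, is_left_ideal (L i)) /\ (forall i, exists a, L i a /\ a <> 0) /\
       independent_family L) /\
  (forall T : nat -> R -> Prop,
     (forall n r, lann (T n) r -> lann (T n.+1) r) ->
     exists N, forall n, (N <= n)%N -> forall r, lann (T n) r <-> lann (T N) r).

Definition sigma_derivation (R : pzRingType) (sigma : R -> R) (delta : R -> R) : Prop :=
  (forall a b, delta (a + b) = delta a + delta b) /\
  (forall a b, delta (a * b) = delta a * b + sigma a * delta b).

Fixpoint lex_lt (d : Order.disp_t) (X : orderType d) (u v : seq X) : bool :=
  match u, v with
  | x :: u', y :: v' => ((x < y)%O) || ((x == y) && lex_lt u' v')
  | _, _ => false
  end.

Definition deglex_lt (d : Order.disp_t) (X : orderType d) (u v : seq X) : bool :=
  (size u < size v)%N || ((size u == size v) && lex_lt u v).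

Definition word (d : Order.disp_t) (X : orderType d) (S : pzRingType) (xv : X -> S)
  (w : seq X) : S := \prod_(x <- w) xv x.

Definition free_basis (d : Order.disp_t) (X : orderType d) (R S : pzRingType)
  (iota : R -> S) (xv : X -> S) : Prop :=
  (forall f : S, exists (s : seq (seq X)) (c : seq X -> R),
      uniq s /\ f = \sum_(w <- s) iota (c w) * word xv w) /\
  (forall (s : seq (seq X)) (c : seq X -> R), uniq s ->
      \sum_(w <- s) iota (c w) * word xv w = 0 -> forall w, w \in s -> c w = 0).

Definition is_lead_coef (d : Order.disp_t) (X : orderType d) (R S : pzRingType)
  (iota : R -> S) (xv : X -> S) (f : S) (r : R) : Prop :=
  exists (s : seq (seq X)) (c : seq X -> R) (w0 : seq X),
    [/\ uniq s, f = \sum_(w <- s) iota (c w) * word xv w, w0 \in s, c w0 = r &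
        r != 0 /\ forall w, w \in s -> w != w0 -> c w != 0 -> deglex_lt w w0].

Inductive add_gen (R : pzRingType) (P : R -> Prop) : R -> Prop :=
  | add_gen_base r : P r -> add_gen P r
  | add_gen_0 : add_gen P 0
  | add_gen_sub a b : add_gen P a -> add_gen P b -> add_gen P (a - b).

Definition ann (R : pzRingType) (I : R -> Prop) : R -> Prop :=
  fun r => forall i, I i -> r * i = 0 /\ i * r = 0.

From HB Require Import structures.
From mathcomp Require Import all_boot all_order all_algebra.
Import Order.TTheory GRing.Theory.
Local Open Scope ring_scope.
Set Implicit Arguments. Unset Strict Implicit. Unset Printing Implicit Defensive.

(* If [f] has leading term [a w], then [r f], [f r] and [x f] have leading terms
   [(r a) w], [(a σ_w(r)) w] and [σ_x(a) (x w)] whenever these coefficients are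
   nonzero, [σ_w] being the composite of the [σ_x] along [w]; as the [σ_x] are
   bijective, [I] is thus a σ-stable ideal.  In the semiprime ring [R], [ann I] is
   both the left and the right annihilator of [I] and meets [I] trivially.  The
   ACC on left annihilators, applied to the decreasing chain [σ_x^-n(ann I)],
   forces [σ_x(ann I) = ann I].  Finally [ann I] kills [A]: for [m] in [ann I] and
   [f] in [A], a nonzero leading coefficient of [m f] would lie in [I ∩ ann I].
   Since [δ_x(m) = x m - σ_x(m) x] in [S], [δ_x(m)] kills [A] too, hence by
   freeness it kills every leading coefficient of [A], i.e. [I]. *)

Section DegLex.
Variables (d : Order.disp_t) (X : orderType d).
Implicit Types u v w : seq X.

Lemma lex_lt_irr u : ~~ lex_lt u u.
Proof. by elim: u => //= x u IH; rewrite ltxx eqxx /= IH. Qed.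

Lemma lex_lt_trans u v w : lex_lt u v -> lex_lt v w -> lex_lt u w.
Proof.
elim: u v w => [|x u IH] [|y v] [|z w] //=.
move=> /orP[xy|/andP[/eqP<- uv]] /orP[yz|/andP[/eqP<- vw]].
- by rewrite (lt_trans xy yz).
- by rewrite xy.
- by rewrite yz.
- by rewrite eqxx (IH _ _ uv vw) orbT.
Qed.

Lemma lex_lt_total u v : size u = size v -> u != v -> lex_lt u v || lex_lt v u.
Proof.
elim: u v => [|x u IH] [|y v] //= [eq_size].
by case: (ltgtP x y) => //= ->; rewrite eqseq_cons eqxx; apply: IH.
Qed.

Lemma deglex_lt_irr u : ~~ deglex_lt u u.
Proof. by rewrite /deglex_lt ltnn eqxx lex_lt_irr. Qed.

Lemma deglex_lt_size u v : deglex_lt u v -> (size u <= size v)%N.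
Proof. by case/orP=> [/ltnW|/andP[/eqP-> _]]. Qed.

Lemma deglex_lt_of_size u v : (size u < size v)%N -> deglex_lt u v.
Proof. by rewrite /deglex_lt => ->. Qed.

Lemma deglex_lt_trans u v w : deglex_lt u v -> deglex_lt v w -> deglex_lt u w.
Proof.
rewrite /deglex_lt => /orP[uv|/andP[/eqP suv luv]] /orP[vw|/andP[/eqP svw lvw]].
- by rewrite (ltn_trans uv vw).
- by rewrite -svw uv.
- by rewrite suv vw.
- by rewrite suv svw eqxx (lex_lt_trans luv lvw) orbT.
Qed.

Lemma deglex_lt_total u v : u != v -> deglex_lt u v || deglex_lt v u.
Proof.
by rewrite /deglex_lt; case: ltngtP => //= /lex_lt_total; apply.
Qed.

Lemma deglex_lt_cons x v w : deglex_lt v w -> deglex_lt (x :: v) (x :: w).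
Proof.
rewrite /deglex_lt /= ltnS eqSS => /orP[->//|/andP[-> lvw]].
by rewrite eqxx lvw !orbT.
Qed.

Lemma deglex_max (l : seq (seq X)) : l != [::] ->
  exists2 w0, w0 \in l & forall w, w \in l -> w != w0 -> deglex_lt w w0.
Proof.
elim: l => [|a l IH] // _; case: (eqVneq l [::]) => [->|/IH[m ml max_m]].
  by exists a => [|w]; rewrite ?inE // => /eqP->; rewrite eqxx.
case: (eqVneq a m) => [->|am].
  exists m => [|w]; rewrite inE ?ml ?orbT // => /orP[/eqP->|]; first by rewrite eqxx.
  exact: max_m.
case/orP: (deglex_lt_total am) => [a_lt_m|m_lt_a].
  by exists m => [|w]; rewrite inE ?ml ?orbT // => /orP[/eqP->//|]; apply: max_m.
exists a => [|w]; rewrite inE ?eqxx // => /orP[/eqP->|wl]; first by rewrite eqxx.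
move=> _; case: (eqVneq w m) => [->//|wm].
exact: deglex_lt_trans (max_m w wl wm) m_lt_a.
Qed.

End DegLex.

Section Annihilators.
Variable R : pzRingType.
Implicit Types (I J : R -> Prop) (a m r : R).

Lemma ann_sub I J : (forall a, I a -> J a) -> forall m, ann J m -> ann I m.
Proof. by move=> IJ m Jm i /IJ /Jm. Qed.

Lemma ann_mulr I m r : is_ideal I -> ann I m -> ann I (m * r).
Proof.
move=> [_ _ Il _] Im i Ii; split; first by rewrite -mulrA; case: (Im _ (Il r i Ii)).
by rewrite mulrA; case: (Im _ Ii) => _ ->; rewrite mul0r.
Qed.

Lemma ideal_preimage (f : {rmorphism R -> R}) I :
  is_ideal I -> is_ideal (fun a => I (f a)).
Proof.
move=> [I0 IB Il Ir]; split=> [|a b Ia Ib|r a Ia|r a Ia].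
- by rewrite rmorph0.
- by rewrite rmorphB; apply: IB.
- by rewrite rmorphM; apply: Il.
- by rewrite rmorphM; apply: Ir.
Qed.

Lemma ann_preimage (f : {rmorphism R -> R}) I : bijective f ->
  forall m, ann (fun a => I (f a)) m <-> ann I (f m).
Proof.
move=> bij_f m; have [g _ gK] := bij_f; split=> [Im i Ii|Im a Ia].
  have [mgi0 gim0] : m * g i = 0 /\ g i * m = 0 by apply: Im; rewrite gK.
  by rewrite -(gK i) -!rmorphM mgi0 gim0 rmorph0.
have f_inj0 b : f b = 0 -> b = 0 by move=> fb0; apply: (bij_inj bij_f); rewrite fb0 rmorph0.
by case: (Im _ Ia); rewrite -!rmorphM => /f_inj0 -> /f_inj0.
Qed.

Lemma add_gen_stable (P : R -> Prop) (f : R -> R) : {morph f : a b / a - b} ->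
  (forall a, P a -> add_gen P (f a)) -> forall a, add_gen P a -> add_gen P (f a).
Proof.
move=> fB fP a; elim=> {a} [a /fP //| |a b _ IHa _ IHb].
  by rewrite -(subrr 0) fB subrr; apply: add_gen_0.
by rewrite fB; apply: add_gen_sub.
Qed.

End Annihilators.

Section Semiprime.
Variable R : pzRingType.
Hypothesis R_semiprime : semiprime R.
Implicit Types (J : R -> Prop) (a x : R).

Lemma semiprime_sqr0 J : is_ideal J -> (forall a b, J a -> J b -> a * b = 0) ->
  forall a, J a -> a = 0.
Proof.
move=> idJ sqrJ0; apply: R_semiprime idJ _; exists 2%N.
case=> [|a [|b []]] //= _ lJ; rewrite !big_cons big_nil mulr1.
by apply: sqrJ0; apply: lJ; rewrite !inE eqxx ?orbT.
Qed.

Lemma ideal_lann_eq0 J a : is_ideal J -> J a -> (forall j, J j -> a * j = 0) -> a = 0.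
Proof.
move=> [J0 JB Jl Jr] Ja aJ0.
pose K b := J b /\ forall j, J j -> b * j = 0.
apply: (@semiprime_sqr0 K) => [| b c [_ bJ0] [Jc _] | ]; [split | exact: bJ0 | by []].
- by split=> // j _; rewrite mul0r.
- move=> b c [Jb bJ0] [Jc cJ0]; split=> [|j Jj]; first exact: JB.
  by rewrite mulrBl bJ0 ?cJ0 ?subr0.
- move=> r b [Jb bJ0]; split=> [|j Jj]; first exact: Jl.
  by rewrite -mulrA bJ0 ?mulr0.
- move=> r b [Jb bJ0]; split=> [|j Jj]; first exact: Jr.
  by rewrite -mulrA bJ0 //; apply: Jl.
Qed.

Lemma ideal_rann_eq0 J a : is_ideal J -> J a -> (forall j, J j -> j * a = 0) -> a = 0.
Proof.
move=> [J0 JB Jl Jr] Ja J0a.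
pose K b := J b /\ forall j, J j -> j * b = 0.
apply: (@semiprime_sqr0 K) => [| b c [Jb _] [_ J0c] | ]; [split | exact: J0c | by []].
- by split=> // j _; rewrite mulr0.
- move=> b c [Jb J0b] [Jc J0c]; split=> [|j Jj]; first exact: JB.
  by rewrite mulrBr J0b ?J0c ?subr0.
- move=> r b [Jb J0b]; split=> [|j Jj]; first exact: Jl.
  by rewrite mulrA J0b //; apply: Jr.
- move=> r b [Jb J0b]; split=> [|j Jj]; first exact: Jr.
  by rewrite mulrA J0b ?mul0r.
Qed.

Lemma ideal_lann_rann J x : is_ideal J ->
  (forall j, J j -> x * j = 0) -> forall j, J j -> j * x = 0.
Proof.
move=> idJ xJ0 j Jj; have [_ _ _ Jr] := idJ.
by apply: (ideal_lann_eq0 idJ (Jr x j Jj)) => k Jk; rewrite -mulrA xJ0 ?mulr0.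
Qed.

Lemma ideal_rann_lann J x : is_ideal J ->
  (forall j, J j -> j * x = 0) -> forall j, J j -> x * j = 0.
Proof.
move=> idJ J0x j Jj; have [_ _ Jl _] := idJ.
by apply: (ideal_rann_eq0 idJ (Jl x j Jj)) => k Jk; rewrite mulrA J0x ?mul0r.
Qed.

Lemma ann_rann_lann J x : is_ideal J ->
  ann J x <-> forall t, lann (ann J) t -> t * x = 0.
Proof.
move=> idJ; split=> [Jx t /(_ x Jx) //|x_ann].
have J0x j : J j -> j * x = 0 by move=> Jj; apply: x_ann => m /(_ j Jj) [].
by move=> j Jj; split; [apply: (ideal_rann_lann idJ J0x) | apply: J0x].
Qed.

End Semiprime.

Definition acc_lann (R : pzRingType) : Prop :=
  forall T : nat -> R -> Prop, (forall n r, lann (T n) r -> lann (T n.+1) r) ->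
  exists N, forall n, (N <= n)%N -> forall r, lann (T n) r <-> lann (T N) r.

Section StableAnnihilator.
Variables (R : pzRingType) (s : {rmorphism R -> R}) (I : R -> Prop).
Hypotheses (R_semiprime : semiprime R) (R_acc : acc_lann R).
Hypotheses (s_bij : bijective s) (I_ideal : is_ideal I).
Hypothesis I_stable : forall a, I a -> I (s a).

Fixpoint iter_rmorph n : {rmorphism R -> R} :=
  if n is m.+1 then (s \o iter_rmorph m)%FUN : {rmorphism R -> R} else idfun.

Lemma iter_rmorph_bij n : bijective (iter_rmorph n).
Proof. by elim: n => [|n IH]; [exists idfun | exact: bij_comp]. Qed.

(* [T n] is the annihilator of the increasing chain of ideals [s^-n(I)];
   semiprimeness recovers it from its left annihilator, to which the ACC applies. *)
Lemma ann_stable m : ann I m -> ann I (s m).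
Proof.
pose T n := ann (fun a => I (iter_rmorph n a)).
have T_decr n r : lann (T n) r -> lann (T n.+1) r.
  by move=> rT0 m' Tm'; apply: rT0; apply: ann_sub Tm' => a; apply: I_stable.
have [N T_stab] := R_acc T_decr.
move=> Im; have [g _ gK] := iter_rmorph_bij N.
have : T N.+1 (g m).
  apply/(ann_rann_lann R_semiprime _ (ideal_preimage _ I_ideal)) => t.
  move/(T_stab _ (leqnSn N)); apply.
  by apply/(ann_preimage I (iter_rmorph_bij N)); rewrite gK.
by move/(ann_preimage I (iter_rmorph_bij N.+1)); rewrite /= gK.
Qed.

Lemma ann_image m : ann I m <-> exists2 r, ann I r & m = s r.
Proof.
split=> [Im|[r Ir ->]]; last exact: ann_stable.
have [g _ gK] := s_bij; exists (g m); last by rewrite gK.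
by apply: (ann_sub I_stable); apply/(ann_preimage I s_bij); rewrite gK.
Qed.

End StableAnnihilator.

Section SkewExtension.
Variables (R : pzRingType) (d : Order.disp_t) (X : orderType d) (S : pzRingType).
Variables (iota : {rmorphism R -> S}) (xv : X -> S).
Variables (sigma : X -> {rmorphism R -> R}) (delta : X -> R -> R).
Hypothesis xv_iota : forall x r,
  xv x * iota r = iota (sigma x r) * xv x + iota (delta x r).

Local Notation wd := (word xv).

Lemma word_nil : wd [::] = 1.
Proof. by rewrite /word big_nil. Qed.

Lemma word_cons x w : wd (x :: w) = xv x * wd w.
Proof. by rewrite /word big_cons. Qed.

Definition in_span (P : seq X -> Prop) (g : S) :=
  exists t : seq (seq X * R),
    g = \sum_(p <- t) iota p.2 * wd p.1 /\ forall p, p \in t -> P p.1.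

Lemma span0 P : in_span P 0.
Proof. by exists [::]; rewrite big_nil. Qed.

Lemma spanD P g h : in_span P g -> in_span P h -> in_span P (g + h).
Proof.
move=> [t1 [-> Pt1]] [t2 [-> Pt2]]; exists (t1 ++ t2); rewrite big_cat.
by split=> // p; rewrite mem_cat => /orP[]; auto.
Qed.

Lemma span_term P v r : P v -> in_span P (iota r * wd v).
Proof.
by move=> Pv; exists [:: (v, r)]; rewrite big_seq1; split=> // p; rewrite inE => /eqP->.
Qed.

Lemma span_sub P Q g : (forall v, P v -> Q v) -> in_span P g -> in_span Q g.
Proof. by move=> PQ [t [-> Pt]]; exists t; split=> // p /Pt /PQ. Qed.

Lemma span_sum (I : eqType) P (l : seq I) (C : pred I) F :
  (forall i, i \in l -> C i -> in_span P (F i)) -> in_span P (\sum_(i <- l | C i) F i).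
Proof.
elim: l => [|i l IH] spanF; first by rewrite big_nil; apply: span0.
have span_l : in_span P (\sum_(j <- l | C j) F j).
  by apply: IH => j jl; apply: spanF; rewrite inE jl orbT.
rewrite big_cons; case: ifP => // Ci; apply: spanD span_l.
by apply: spanF; rewrite ?mem_head.
Qed.

Lemma span_mull P r g : in_span P g -> in_span P (iota r * g).
Proof.
move=> [t [-> Pt]]; exists [seq (p.1, r * p.2) | p <- t].
rewrite big_map mulr_sumr; split; first by apply: eq_bigr => p _; rewrite rmorphM mulrA.
by move=> p /mapP [q qt ->]; exact: Pt qt.
Qed.

Lemma span_mulX P Q x g : in_span P g ->
  (forall v, P v -> Q (x :: v) /\ Q v) -> in_span Q (xv x * g).
Proof.
move=> [t [-> Pt]] PQ; rewrite mulr_sumr; apply: span_sum => p pt _.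
rewrite mulrA xv_iota mulrDl -mulrA -word_cons.
by have [Qxp Qp] := PQ _ (Pt p pt); apply: spanD; apply: span_term.
Qed.

Definition sigma_word (w : seq X) (r : R) : R := foldr (fun x => sigma x) r w.

Lemma word_mul_iota w r : exists2 g, wd w * iota r = iota (sigma_word w r) * wd w + g &
  in_span (fun v => (size v < size w)%N) g.
Proof.
elim: w => [|x w [g wr_eq g_span]].
  by exists 0; rewrite ?word_nil ?mul1r ?mulr1 ?addr0 //; apply: span0.
exists (iota (delta x (sigma_word w r)) * wd w + xv x * g).
  rewrite word_cons -mulrA wr_eq mulrDr mulrA xv_iota mulrDl addrA.
  by rewrite -[iota (sigma x _) * xv x * wd w]mulrA -word_cons.
apply: spanD; first exact: span_term.
by apply: (span_mulX g_span) => v v_lt /=; rewrite !ltnS v_lt ltnW.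
Qed.

Lemma span_mulr P r g : (forall u v, P v -> (size u < size v)%N -> P u) ->
  in_span P g -> in_span P (g * iota r).
Proof.
move=> P_down [t [-> Pt]]; rewrite mulr_suml; apply: span_sum => p pt _.
have [h pr_eq h_span] := word_mul_iota p.1 r.
rewrite -mulrA pr_eq mulrDr mulrA -rmorphM; apply: spanD; first exact/span_term/Pt.
by apply/span_mull/(span_sub _ h_span) => u; apply/P_down/Pt.
Qed.

Definition lead_term (f : S) (a : R) (w0 : seq X) :=
  a != 0 /\ exists g, f = iota a * wd w0 + g /\ in_span (fun v => deglex_lt v w0) g.

Lemma lead_term_of_coef f a : is_lead_coef iota xv f a -> exists w0, lead_term f a w0.
Proof.
move=> [s [c [w0 [us -> w0s <- [a0 lower]]]]]; exists w0; split=> //.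
exists (\sum_(w <- s | w != w0) iota (c w) * wd w); split; first by rewrite (bigD1_seq w0).
apply: span_sum => w ws ww0; case: (eqVneq (c w) 0) => [->|cw0].
  by rewrite rmorph0 mul0r; apply: span0.
exact/span_term/lower.
Qed.

Lemma sum_terms_collect (t : seq (seq X * R)) (U : seq (seq X)) : uniq U ->
  {subset map fst t <= U} ->
  \sum_(p <- t) iota p.2 * wd p.1 =
  \sum_(w <- U) iota (\sum_(p <- t | p.1 == w) p.2) * wd w.
Proof.
elim: t => [|p t IH] uU tU.
  by rewrite big_nil big1 // => w _; rewrite big_nil rmorph0 mul0r.
rewrite big_cons IH => [|//|w wt]; last by apply: tU; rewrite /= inE wt orbT.
have pU : p.1 \in U by apply: tU; rewrite /= mem_head.
rewrite !(bigD1_seq p.1) //= big_cons eqxx rmorphD mulrDl -addrA; congr (_ + (_ + _)).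
by apply: eq_bigr => w wp; rewrite big_cons eq_sym (negbTE wp).
Qed.

Lemma lead_coef_of_term f a w0 : lead_term f a w0 -> is_lead_coef iota xv f a.
Proof.
move=> [a0 [g [-> [t [-> t_lt]]]]].
set U := undup (map fst t); have uU : uniq U := undup_uniq _.
have w0U : w0 \notin U.
  rewrite mem_undup; apply/mapP => -[p pt e].
  by move: (t_lt p pt); rewrite -e (negbTE (deglex_lt_irr _)).
exists (w0 :: U), (fun w => if w == w0 then a else \sum_(p <- t | p.1 == w) p.2), w0.
rewrite (@sum_terms_collect t U) => [|//|w]; last by rewrite mem_undup.
split; rewrite ?mem_head ?eqxx //=; first by rewrite w0U.
- rewrite big_cons eqxx; congr (_ + _); apply: eq_big_seq => w wU.
  by case: eqP wU w0U => // ->->.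
- split=> // w; rewrite inE => /orP[/eqP->|]; first by rewrite eqxx.
  by rewrite mem_undup => /mapP[p pt ->] _ _; apply: t_lt.
Qed.

Lemma lead_term_mull f a w0 r : lead_term f a w0 -> r * a != 0 ->
  lead_term (iota r * f) (r * a) w0.
Proof.
move=> [_ [g [-> g_span]]] ra0; split=> //; exists (iota r * g).
by rewrite mulrDr mulrA rmorphM; split=> //; apply: span_mull.
Qed.

Lemma lead_term_mulr f a w0 r : lead_term f a w0 -> a * sigma_word w0 r != 0 ->
  lead_term (f * iota r) (a * sigma_word w0 r) w0.
Proof.
move=> [_ [g [-> g_span]]] ar0; split=> //.
have [h w0r_eq h_span] := word_mul_iota w0 r.
exists (iota a * h + g * iota r); split.
  by rewrite mulrDl -mulrA w0r_eq mulrDr mulrA -rmorphM addrA.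
apply: spanD; first by apply/span_mull/(span_sub _ h_span) => v; apply: deglex_lt_of_size.
apply: span_mulr g_span => u v vw0 uv; apply: deglex_lt_of_size.
exact: leq_trans uv (deglex_lt_size vw0).
Qed.

Lemma lead_term_mulX f a w0 x : lead_term f a w0 -> sigma x a != 0 ->
  lead_term (xv x * f) (sigma x a) (x :: w0).
Proof.
move=> [_ [g [-> g_span]]] sa0; split=> //.
exists (iota (delta x a) * wd w0 + xv x * g); split.
  by rewrite mulrDr mulrA xv_iota mulrDl -mulrA -word_cons addrA.
apply: spanD; first by apply: span_term; apply: deglex_lt_of_size.
apply: (span_mulX g_span) => v vw0; split; first exact: deglex_lt_cons.
by apply: deglex_lt_of_size; rewrite /= ltnS deglex_lt_size.
Qed.

Lemma lead_coef_sum (s : seq (seq X)) (c : seq X -> R) : uniq s ->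
  (exists2 w, w \in s & c w != 0) ->
  exists2 w0, w0 \in s & is_lead_coef iota xv (\sum_(w <- s) iota (c w) * wd w) (c w0).
Proof.
move=> us [w ws cw0].
have /deglex_max[w0] : [seq w <- s | c w != 0] != [::].
  by apply/eqP => nil_eq; move: (mem_filter (fun w => c w != 0) w s); rewrite nil_eq cw0 ws.
rewrite mem_filter => /andP[c_w0_neq0 w0s] w0_max; exists w0 => //; exists s, c, w0.
by split=> //; split=> // w' w's w'w0 cw'0; apply: w0_max; rewrite ?mem_filter ?cw'0.
Qed.

Lemma lead_coef_lann f a t : free_basis iota xv -> is_lead_coef iota xv f a ->
  iota t * f = 0 -> t * a = 0.
Proof.
move=> [_ free] [s [c [w0 [us -> w0s <- _]]]]; rewrite mulr_sumr.
under eq_bigr do rewrite mulrA -rmorphM.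
by move/(free s (fun w => t * c w) us); apply.
Qed.

End SkewExtension.

Section LeadIdeal.
Variables (R : pzRingType) (d : Order.disp_t) (X : orderType d) (S : pzRingType).
Variables (iota : {rmorphism R -> S}) (xv : X -> S).
Variables (sigma : X -> {rmorphism R -> R}) (delta : X -> R -> R).
Hypothesis xv_iota : forall x r,
  xv x * iota r = iota (sigma x r) * xv x + iota (delta x r).
Hypothesis sigma_bij : forall x, bijective (sigma x).
Variable A : S -> Prop.
Hypothesis A_ideal : is_ideal A.

Definition lead_ideal := add_gen (fun r => exists2 f, A f & is_lead_coef iota xv f r).
Local Notation I := lead_ideal.

Lemma lead_coef_neq0 f a : is_lead_coef iota xv f a -> a != 0.
Proof. by case=> [s [c [w0 [_ _ _ _ []]]]]. Qed.

Lemma sigma_word_surj w r : exists r', sigma_word sigma w r' = r.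
Proof.
elim: w r => [|x w IH] r; first by exists r.
have [g _ gK] := sigma_bij x; have [r' wr'] := IH (g r).
by exists r'; rewrite /= wr' gK.
Qed.

Lemma lead_ideal_mull r a : I a -> I (r * a).
Proof.
apply: (@add_gen_stable _ _ ( *%R r)) => [b c|a' [f Af /lead_term_of_coef[w0 fa]]].
  exact: mulrBr.
case: (eqVneq (r * a') 0) => [->|ra0]; first exact: add_gen_0.
apply: add_gen_base; exists (iota r * f); first by case: A_ideal => _ _ Al _; apply: Al.
exact/lead_coef_of_term/(lead_term_mull fa ra0).
Qed.

Lemma lead_ideal_mulr r a : I a -> I (a * r).
Proof.
apply: (@add_gen_stable _ _ ( *%R^~ r)) => [b c|a' [f Af /lead_term_of_coef[w0 fa]]].
  exact: mulrBl.
have [r' <-] := sigma_word_surj w0 r.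
case: (eqVneq (a' * sigma_word sigma w0 r') 0) => [->|ar0]; first exact: add_gen_0.
apply: add_gen_base; exists (f * iota r'); first by case: A_ideal => _ _ _ Ar; apply: Ar.
exact/lead_coef_of_term/(lead_term_mulr xv_iota fa ar0).
Qed.

Lemma lead_ideal_ideal : is_ideal I.
Proof.
split=> [|a b|r a|r a].
- exact: add_gen_0.
- exact: add_gen_sub.
- exact: lead_ideal_mull.
- exact: lead_ideal_mulr.
Qed.

Lemma lead_ideal_sigma x a : I a -> I (sigma x a).
Proof.
apply: add_gen_stable => [b c|a' [f Af la]]; first exact: rmorphB.
have [w0 fa] := lead_term_of_coef la.
have sa0 : sigma x a' != 0.
  by rewrite -(rmorph0 (sigma x)) (inj_eq (bij_inj (sigma_bij x))) (lead_coef_neq0 la).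
apply: add_gen_base; exists (xv x * f); first by case: A_ideal => _ _ Al _; apply: Al.
exact/lead_coef_of_term/(lead_term_mulX xv_iota fa sa0).
Qed.

Hypotheses (R_semiprime : semiprime R) (S_free : free_basis iota xv).

Lemma ann_lead_ideal_mul m f : ann I m -> A f -> iota m * f = 0.
Proof.
move=> Im Af; have [s [c [us f_eq]]] := S_free.1 f.
have mf_eq : iota m * f = \sum_(w <- s) iota (m * c w) * word xv w.
  by rewrite f_eq mulr_sumr; apply: eq_bigr => w _; rewrite mulrA -rmorphM.
rewrite mf_eq; case: (boolP (all (fun w => m * c w == 0) s)) => [/allP mc0|/allPn mc_neq0].
  by rewrite big1_seq // => w /andP[_ /mc0/eqP->]; rewrite rmorph0 mul0r.
have [w0 _ lc] := lead_coef_sum iota xv us mc_neq0.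
have Imc : I (m * c w0).
  apply: add_gen_base; exists (iota m * f); last by rewrite mf_eq.
  by case: A_ideal => _ _ Al _; apply: Al.
have mc_ann j : I j -> m * c w0 * j = 0.
  by move=> Ij; case: (ann_mulr (c w0) lead_ideal_ideal Im Ij).
have := lead_coef_neq0 lc.
by rewrite (ideal_lann_eq0 R_semiprime lead_ideal_ideal Imc mc_ann) eqxx.
Qed.

Hypothesis R_acc : acc_lann R.

Lemma ann_lead_ideal_delta x m : ann I m -> ann I (delta x m).
Proof.
move=> Im; have Ism := ann_stable R_semiprime R_acc (sigma_bij x) lead_ideal_ideal
  (@lead_ideal_sigma x) Im.
have dA f : A f -> iota (delta x m) * f = 0.
  have -> : iota (delta x m) = xv x * iota m - iota (sigma x m) * xv x.
    by rewrite xv_iota addrC addKr.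
  move=> Af; have [_ _ Al _] := A_ideal.
  by rewrite mulrBl -!mulrA !ann_lead_ideal_mul ?mulr0 ?subrr //; apply: Al.
have dI j : I j -> delta x m * j = 0.
  elim=> [a [f Af lc]| |a b _ da _ db]; first exact: lead_coef_lann S_free lc (dA f Af).
    by rewrite mulr0.
  by rewrite mulrBr da db subrr.
move=> j Ij; split; first exact: dI.
exact: (ideal_lann_rann R_semiprime lead_ideal_ideal dI Ij).
Qed.

End LeadIdeal.

Unset Implicit Arguments.
Set Strict Implicit.

Theorem proposition2
  (R : pzRingType) (hsp : semiprime R) (hgo : left_Goldie R)
  (d : Order.disp_t) (X : orderType d) (hX : inhabited X)
  (sigma : X -> {rmorphism R -> R}) (hsig : forall x, bijective (sigma x))
  (delta : X -> R -> R) (hdel : forall x, sigma_derivation (sigma x) (delta x))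
  (S : pzRingType) (iota : {rmorphism R -> S}) (hiota : injective iota)
  (xv : X -> S) (hfree : free_basis iota xv)
  (hcomm : forall (x : X) (r : R),
      xv x * iota r = iota (sigma x r) * xv x + iota (delta x r))
  (A : S -> Prop) (hA : is_ideal A) (hA0 : exists a, A a /\ a <> 0) :
  let I := add_gen (fun r => exists2 f, A f & is_lead_coef iota xv f r) in
  let M := ann I in
  [/\ is_ideal I,
      (forall x r, I r -> I (sigma x r)) &
      (forall x, (forall y, M y <-> exists2 r, M r & y = sigma x r) /\
                 (forall r, M r -> M (delta x r)))].
Proof.
move=> I M.
have I_ideal : is_ideal I := lead_ideal_ideal hcomm hsig hA.
have I_sigma x : forall r, I r -> I (sigma x r) := lead_ideal_sigma hcomm hsig hA x.
split=> // x; split=> [y|r Mr].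
- exact: (ann_image hsp hgo.2 (hsig x) I_ideal (I_sigma x) y).
- exact: (ann_lead_ideal_delta hcomm hsig hA hsp hfree hgo.2 x Mr).
Qed.
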